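(* Let $F(x)=\frac{\sqrt{1-2x+5x^2}+x-1}{2x}$ (a power series with $F(0)=0$), and for $n,k\geq0$ let $t_{n,k}=[x^n]\,\frac{1}{x}F(x)^{k+1}$. Then for all $n\geq 0$, $$m_n=\sum_{k=0}^{n}t_{n,k}\,s_k .$$
   Context: Steps: $U=(1,1)$, $D=(1,-1)$, $h=(1,0)$, $H=(2,0)$. A Motzkin path of length $2n$ is a lattice path from $(0,0)$ to $(2n,0)$ with steps $U,D,h$ never going below the $x$-axis; a Schröder path of length $2n$ is the same with steps $U,D,H$. Such a path is symmetric if it has a vertex with $x$-coordinate $n$ and is invariant under reflection in the line $x=n$ (reversing the step sequence and interchanging $U$ and $D$, keeping horizontal steps, gives the same sequence). $m_n$ = number of symmetric Motzkin paths of length $2n$, $s_n$ = number of symmetric Schröder paths of length $2n$. $[x^n]$ denotes the coefficient of $x^n$. *)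

From HB Require Import structures.
From mathcomp Require Import all_boot all_order all_algebra.
Set Implicit Arguments. Unset Strict Implicit. Unset Printing Implicit Defensive.
Import Order.TTheory GRing.Theory Num.Theory.

(* Steps: U=(1,1), D=(1,-1), h=(1,0), H=(2,0). *)
Inductive step := U | D | Hh | HH.

Definition step_eqb (a b : step) : bool :=
  match a, b with
  | U, U | D, D | Hh, Hh | HH, HH => true
  | _, _ => false
  end.
Lemma step_eqP : Equality.axiom step_eqb.
Proof. by case; case; constructor. Qed.
HB.instance Definition _ := hasDecEq.Build step step_eqP.

Definition xlen_step (s : step) : nat := if s is HH then 2 else 1.
Definition xlen (p : seq step) : nat := sumn (map xlen_step p).

Fixpoint nonneg_ends0 (h : nat) (p : seq step) : bool :=
  match p with
  | [::] => h == 0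
  | U :: p' => nonneg_ends0 h.+1 p'
  | D :: p' => (0 < h) && nonneg_ends0 h.-1 p'
  | _ :: p' => nonneg_ends0 h p'
  end.

Definition is_path (steps : seq step) (n : nat) (p : seq step) : bool :=
  all (fun s => s \in steps) p && (xlen p == n.*2) && nonneg_ends0 0 p.

Definition motzkin_path (n : nat) (p : seq step) := is_path [:: U; D; Hh] n p.
Definition schroder_path (n : nat) (p : seq step) := is_path [:: U; D; HH] n p.

(* reflection in a vertical line: reverse the sequence, swap U and D *)
Definition flip (s : step) : step :=
  match s with U => D | D => U | s => s end.

Definition has_vertex_at (n : nat) (p : seq step) : bool :=
  has (fun i => xlen (take i p) == n) (iota 0 (size p).+1).

Definition symmetric (n : nat) (p : seq step) : bool :=
  has_vertex_at n p && (map flip (rev p) == p).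

Fixpoint words (j : nat) : seq (seq step) :=
  match j with
  | 0 => [:: [::]]
  | j'.+1 => flatten [seq [seq s :: w | w <- words j'] | s <- [:: U; D; Hh; HH]]
  end.

(* all words of length at most L (each exactly once); every path of
   horizontal length 2n has at most 2n steps *)
Definition words_upto (L : nat) : seq (seq step) :=
  flatten [seq words j | j <- iota 0 L.+1].

Definition m_ (n : nat) : nat :=
  count (fun p => motzkin_path n p && symmetric n p) (words_upto n.*2).
Definition s_ (n : nat) : nat :=
  count (fun p => schroder_path n p && symmetric n p) (words_upto n.*2).

Local Open Scope ring_scope.

Definition fps := nat -> rat.

Definition fps_mul (a b : fps) : fps :=
  fun n => \sum_(i < n.+1) a i * b (n - i)%N.

Definition fps_one : fps := fun n => if n is 0%N then 1 else 0.

Fixpoint fps_pow (a : fps) (k : nat) : fps :=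
  match k with
  | 0%N => fps_one
  | k'.+1 => fps_mul a (fps_pow a k')
  end.

(* Formal square root of a series a with a 0 = 1: the unique S with S 0 = 1
   and S * S = a.  Coefficients from S^2 = a:
   2 S_0 S_n + sum_{i=1}^{n-1} S_i S_{n-i} = a_n. *)
Fixpoint sqrt_list (a : fps) (n : nat) : seq rat :=
  match n with
  | 0%N => [:: 1]
  | n'.+1 =>
      let s := sqrt_list a n' in
      rcons s ((a n'.+1 - \sum_(1 <= i < n'.+1) s`_i * s`_(n'.+1 - i)) / 2%:R)
  end.
Definition fps_sqrt (a : fps) : fps := fun n => (sqrt_list a n)`_n.

Definition P_ : fps := fun n =>
  match n with 0%N => 1 | 1%N => -2%:R | 2%N => 5%:R | _ => 0 end.

(* F(x) = (sqrt(1-2x+5x^2) + x - 1) / (2x):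
   [x^n] F = ([x^(n+1)] (sqrt(1-2x+5x^2) + x - 1)) / 2 *)
Definition F_ : fps := fun n =>
  (fps_sqrt P_ n.+1 + (if n is 0%N then 1 else 0)) / 2%:R.

(* t_{n,k} = [x^n] (1/x) F(x)^(k+1) = [x^(n+1)] F(x)^(k+1) *)
Definition t_ (n k : nat) : rat := fps_pow F_ k.+1 n.+1.

(* Cutting a symmetric path of length 2n at its middle vertex identifies it with
   its left half, a meander: a path of x-length n that never goes below the axis
   but may end at any height; the path is recovered by appending the mirror image
   of the half.  Let a_n(j) and b_k(j) count the Motzkin and Schröder meanders
   starting at height j.  Splitting off the first step gives
     a_(n+1)(j) = a_n(j+1) + a_n(j-1) + a_n(j),
     b_(k+1)(j) = b_k(j+1) + b_k(j-1) + b_(k-1)(j).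
   On the other side F = x (1 + F - F^2), hence
     t_(n+1,k) = t_(n,k-1) + t_(n,k) - t_(n,k+1),
   and summing this against b_k(j) with the Schröder recurrence shows that
   n |-> sum_k t_(n,k) b_k(j) obeys the Motzkin recurrence.  So
   a_n(j) = sum_k t_(n,k) b_k(j) for every j; j = 0 is the theorem. *)

From Pilot Require Import Defs.
From HB Require Import structures.
From mathcomp Require Import all_boot all_order all_algebra ring.
Import Order.TTheory GRing.Theory Num.Theory.

Definition step_height (h : nat) (s : step) : option nat :=
  match s with
  | U => Some h.+1
  | D => if h is h'.+1 then Some h' else None
  | _ => Some h
  end.

Fixpoint final_height (h : nat) (p : seq step) : option nat :=
  if p is s :: p' then obind (final_height^~ p') (step_height h s) else Some h.

Lemma nonneg_ends0E h p : nonneg_ends0 h p = (final_height h p == Some 0).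
Proof. by elim: p h => [|[] p IH] [|h] /=. Qed.

Lemma final_height_cat h p q :
  final_height h (p ++ q) = obind (final_height^~ q) (final_height h p).
Proof. by elim: p h => [|s p IH] h //=; case: (step_height h s). Qed.

Definition mirror (p : seq step) : seq step := map flip (rev p).

Lemma flipK : involutive flip. Proof. by case. Qed.

Lemma mirror_cat p q : mirror (p ++ q) = mirror q ++ mirror p.
Proof. by rewrite /mirror rev_cat map_cat. Qed.

Lemma mirror_cons s p : mirror (s :: p) = mirror p ++ [:: flip s].
Proof. by rewrite -cat1s mirror_cat. Qed.

Lemma mirrorK : involutive mirror.
Proof. by move=> p; rewrite /mirror -map_rev revK -map_comp (eq_map flipK) map_id. Qed.

Lemma final_height_mirror h k p :
  final_height h p = Some k -> final_height k (mirror p) = Some h.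
Proof.
elim: p h => [|s p IH] h /=; first by case=> ->.
by rewrite mirror_cons final_height_cat; case: s; case: h => [|h] //= /IH ->.
Qed.

Lemma xlen_cat p q : xlen (p ++ q) = (xlen p + xlen q)%N.
Proof. by rewrite /xlen map_cat sumn_cat. Qed.

Lemma xlen_cons s p : xlen (s :: p) = (xlen_step s + xlen p)%N.
Proof. by []. Qed.

Lemma xlen_mirror p : xlen (mirror p) = xlen p.
Proof. by elim: p => [|s p IH] //; rewrite mirror_cons xlen_cat IH addnC; case: s. Qed.

Lemma xlen_step_gt0 s : (0 < xlen_step s)%N. Proof. by case: s. Qed.

Lemma subSn_xlen_step n s : (n.+1 - xlen_step s <= n)%N.
Proof. by rewrite leq_subLR -add1n leq_add2r xlen_step_gt0. Qed.

Lemma size_le_xlen p : (size p <= xlen p)%N.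
Proof. by elim: p => [|s p IH] //=; rewrite xlen_cons -add1n leq_add ?xlen_step_gt0. Qed.

Lemma eq_xlen_cat p q p' q' :
  p ++ q = p' ++ q' -> xlen p = xlen p' -> p = p'.
Proof.
elim: p p' => [|s p IH] [|s' p'] //=.
- by move=> _ /esym/eqP; rewrite xlen_cons addn_eq0 eqn0Ngt xlen_step_gt0.
- by move=> _ /eqP; rewrite xlen_cons addn_eq0 eqn0Ngt xlen_step_gt0.
- by move=> [-> /IH e]; rewrite !xlen_cons => /addnI/e ->.
Qed.

Lemma mem_cons_allpairs (ss : seq step) (l : step -> seq (seq step)) p :
  (p \in [seq s :: w | s <- ss, w <- l s]) =
  if p is s :: w then (s \in ss) && (w \in l s) else false.
Proof.
apply/allpairsPdep/idP => [[s [w [ss_s lw ->]]]|]; first by rewrite ss_s.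
by case: p => // s w /andP[ss_s lw]; exists s, w.
Qed.

Lemma uniq_cons_allpairs (ss : seq step) (l : step -> seq (seq step)) :
  uniq ss -> (forall s, uniq (l s)) -> uniq [seq s :: w | s <- ss, w <- l s].
Proof.
by move=> uss ul; apply: allpairs_uniq_dep => // [[s w] [s' w'] _ _ /= [-> ->]].
Qed.

Lemma mem_words j p : (p \in words j) = (size p == j).
Proof.
elim: j p => [|j IH] [|s p] //; rewrite [LHS](mem_cons_allpairs _ (fun=> words j)) //=.
by rewrite IH; case: s.
Qed.

Lemma uniq_words j : uniq (words j).
Proof. by elim: j => [|j IH] //; apply: uniq_cons_allpairs. Qed.

Lemma mem_words_upto L p : (p \in words_upto L) = (size p <= L)%N.
Proof.
apply/flattenP/idP => [[l /mapP[j]]|le_pL].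
  by rewrite mem_iota => /andP[_ ltjL] -> /[!mem_words] /eqP ->.
by exists (words (size p)); rewrite ?mem_words //; apply: map_f; rewrite mem_iota.
Qed.

Lemma uniq_words_upto L : uniq (words_upto L).
Proof.
rewrite /words_upto; elim: L.+1 0%N => [|m IH] i //=.
rewrite cat_uniq uniq_words IH andbT; apply/hasPn => p /flattenP[l /mapP[k]].
by rewrite mem_iota mem_words => /andP[ltik _] -> /[!mem_words] /eqP->; rewrite gtn_eqF.
Qed.

Definition symmetrize (w : seq step) : seq step := w ++ mirror w.

Lemma symmetrize_inj : injective symmetrize.
Proof.
move=> w w' e; have size_w : size w = size w'.
  by apply: double_inj; move/(congr1 size): e; rewrite !size_cat !size_map !size_rev !addnn.
rewrite -(take_size_cat (mirror w) (erefl (size w))) -/(symmetrize w) e.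
by rewrite size_w take_size_cat.
Qed.

Section Meanders.

Variable ss : seq step.

Definition meander (n j : nat) (w : seq step) : bool :=
  all (mem ss) w && (xlen w == n) && (final_height j w != None).

Lemma meander_nil n j : meander n j [::] = (n == 0%N).
Proof. by rewrite /meander andbT eq_sym. Qed.

Lemma meander_cons n j s w :
  meander n j (s :: w) =
  [&& s \in ss, (xlen_step s <= n)%N &
      if step_height j s is Some j' then meander (n - xlen_step s) j' w else false].
Proof.
rewrite /meander /= xlen_cons.
have -> : (xlen_step s + xlen w == n) = (xlen_step s <= n)%N && (xlen w == n - xlen_step s).
  case: leqP => [le_sn|lt_ns]; last by rewrite gtn_eqF ?ltn_addr.
  by rewrite -(eqn_sub2rE (leq_addr (xlen w) _) le_sn) addKn.
case: (s \in ss) (xlen_step s <= n)%N (step_height j s) => [] [] [j'|] /=;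
  by rewrite ?andbF.
Qed.

Lemma meander0 j w : meander 0 j w = (w == [::]).
Proof.
by case: w => [|s w]; rewrite ?meander_nil // meander_cons leqNgt xlen_step_gt0 andbF.
Qed.

(* [f] is recursion fuel ([n] does not decrease structurally); it suffices that
   [n <= f]. *)
Fixpoint meanders (f n j : nat) : seq (seq step) :=
  if n is 0 then [:: [::]] else
  if f is f'.+1 then
    [seq s :: w | s <- ss, w <- if (xlen_step s <= n)%N then
       if step_height j s is Some j' then meanders f' (n - xlen_step s) j' else [::]
       else [::]]
  else [::].

Lemma mem_meanders f n j w : (n <= f)%N -> (w \in meanders f n j) = meander n j w.
Proof.
elim: f n j w => [|f IH] [|n] j w //=; rewrite ?meander0 ?inE // ltnS => le_nf.
rewrite mem_cons_allpairs; case: w => [|s w]; first by rewrite meander_nil.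
rewrite meander_cons; case: leqP => //= le_sn; case: step_height => [j'|]; rewrite ?andbF //.
by rewrite IH // (leq_trans (subSn_xlen_step _ _) le_nf).
Qed.

Hypothesis ss_uniq : uniq ss.

Lemma uniq_meanders f n j : uniq (meanders f n j).
Proof.
elim: f n j => [|f IH] [|n] j //=; apply: uniq_cons_allpairs => // s.
by case: leqP; case: step_height.
Qed.

Definition meander_count (n j : nat) : nat := size (meanders n n j).

Lemma size_meanders f n j : (n <= f)%N -> size (meanders f n j) = meander_count n j.
Proof.
move=> le_nf; apply/perm_size/uniq_perm; rewrite ?uniq_meanders // => w.
by rewrite !mem_meanders.
Qed.

Lemma meander_countS n j :
  meander_count n.+1 j =
  \sum_(s <- ss) if (xlen_step s <= n.+1)%N then
    if step_height j s is Some j' then meander_count (n.+1 - xlen_step s) j' else 0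
    else 0.
Proof.
rewrite /meander_count /= size_allpairs_dep sumnE big_map; apply: eq_bigr => s _.
case: leqP => // le_sn; case: step_height => // j'.
by rewrite size_meanders // subSn_xlen_step.
Qed.

Hypothesis ss_flip : forall s, (flip s \in ss) = (s \in ss).

Lemma all_mirror p : all (mem ss) (mirror p) = all (mem ss) p.
Proof. by rewrite /mirror all_map all_rev; apply: eq_all => s; apply: ss_flip. Qed.

Lemma symmetric_path_half n p : is_path ss n p -> Defs.symmetric n p ->
  exists2 w, meander n 0 w & p = symmetrize w.
Proof.
move=> /andP[/andP[all_p /eqP xlen_p] nonneg_p] /andP[/hasP[i _ /eqP xlen_w] /eqP mirror_p].
set w := take i p in xlen_w; set v := drop i p.
have p_wv : p = w ++ v by rewrite cat_take_drop.
have xlen_v : xlen v = n.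
  by apply/eqP; rewrite -(eqn_add2l (xlen w)) -xlen_cat -p_wv xlen_p xlen_w addnn.
have v_w : v = mirror w.
  rewrite -[v]mirrorK; congr mirror; apply: (@eq_xlen_cat _ (mirror w) _ v).
    by rewrite -mirror_cat -p_wv [mirror p]mirror_p.
  by rewrite xlen_mirror xlen_v xlen_w.
exists w; last by rewrite p_wv v_w.
move: all_p nonneg_p; rewrite p_wv all_cat nonneg_ends0E final_height_cat.
by rewrite /meander xlen_w eqxx => /andP[-> _]; case: final_height.
Qed.

Lemma symmetrize_path n w : meander n 0 w ->
  is_path ss n (symmetrize w) && Defs.symmetric n (symmetrize w).
Proof.
move=> /andP[/andP[all_w /eqP xlen_w] end_w].
rewrite /is_path /Defs.symmetric /symmetrize all_cat all_mirror all_w xlen_cat xlen_mirror.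
rewrite xlen_w addnn eqxx nonneg_ends0E final_height_cat -/(mirror _) mirror_cat mirrorK.
rewrite eqxx !andbT.
apply/andP; split.
  by case E: final_height end_w => [k|] //= _; rewrite (final_height_mirror _ _ _ E).
apply/hasP; exists (size w); last by rewrite take_size_cat ?xlen_w.
by rewrite mem_iota add0n ltnS size_cat leq_addr.
Qed.

Lemma count_symmetric_paths n :
  count (fun p => is_path ss n p && Defs.symmetric n p) (words_upto n.*2) = meander_count n 0.
Proof.
rewrite -size_filter /meander_count -[RHS](size_map symmetrize).
apply/perm_size/uniq_perm; rewrite ?filter_uniq ?uniq_words_upto //.
  by rewrite (map_inj_uniq symmetrize_inj) uniq_meanders.
move=> p; rewrite mem_filter; apply/andP/mapP => [[/andP[path_p sym_p] _]|[w]].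
  by have [w m_w ->] := symmetric_path_half _ _ path_p sym_p; exists w; rewrite ?mem_meanders.
rewrite mem_meanders // => /symmetrize_path /andP[path_p sym_p] ->.
rewrite path_p sym_p mem_words_upto; split=> //.
by case/andP: path_p => /andP[_ /eqP <-] _; apply: size_le_xlen.
Qed.

End Meanders.

Local Open Scope ring_scope.

Lemma size_sqrt_list a n : size (sqrt_list a n) = n.+1.
Proof. by elim: n => //= n IH; rewrite size_rcons IH. Qed.

Lemma nth_sqrt_list a i n : (i <= n)%N -> (sqrt_list a n)`_i = fps_sqrt a i.
Proof.
elim: n => [|n IH]; first by rewrite leqn0 => /eqP ->.
rewrite leq_eqVlt => /predU1P[-> //|lt_in].
by rewrite /= nth_rcons size_sqrt_list lt_in IH.
Qed.

Lemma fps_sqrtS a n : fps_sqrt a n.+1 =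
  (a n.+1 - \sum_(1 <= i < n.+1) fps_sqrt a i * fps_sqrt a (n.+1 - i)%N) / 2%:R.
Proof.
rewrite {1}/fps_sqrt /= nth_rcons size_sqrt_list ltnn eqxx.
congr ((_ - _) / _); apply: eq_big_nat => -[//|i] /andP[_ lt_in].
by rewrite !nth_sqrt_list // subSS leq_subr.
Qed.

Lemma fps_sqrt_sqr a : a 0%N = 1 -> fps_mul (fps_sqrt a) (fps_sqrt a) =1 a.
Proof.
move=> a0 [|n]; first by rewrite /fps_mul big_ord1 mulr1 a0.
rewrite /fps_mul big_ord_recl big_ord_recr /= subn0 subnn.
rewrite fps_sqrtS big_add1 big_mkord.
under eq_bigr do rewrite /bump /= subSS.
have -> : fps_sqrt a 0 = 1 by [].
by field.
Qed.

Definition trunc (N : nat) (a : fps) : {poly rat} := \poly_(i < N) a i.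

Lemma coef_trunc N a i : (i < N)%N -> (trunc N a)`_i = a i.
Proof. by rewrite coef_poly => ->. Qed.

Lemma coefM_eq_lt N (p p' q q' : {poly rat}) :
  (forall i, (i < N)%N -> p`_i = p'`_i) -> (forall i, (i < N)%N -> q`_i = q'`_i) ->
  forall i, (i < N)%N -> (p * q)`_i = (p' * q')`_i.
Proof.
move=> pp' qq' i lt_iN; rewrite !coefM; apply: eq_bigr => j _.
by rewrite pp' ?qq' // (leq_ltn_trans _ lt_iN) ?leq_subr // -ltnS.
Qed.

Lemma coef_fps_mul N a b i : (i < N)%N -> fps_mul a b i = (trunc N a * trunc N b)`_i.
Proof.
move=> lt_iN; rewrite coefM; apply: eq_bigr => j _.
by rewrite !coef_trunc // (leq_ltn_trans _ lt_iN) ?leq_subr // -ltnS.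
Qed.

Lemma coef_fps_pow N a k i : (i < N)%N -> fps_pow a k i = (trunc N a ^+ k)`_i.
Proof.
elim: k i => [|k IH] i lt_iN; first by rewrite expr0 coef1; case: i {lt_iN}.
rewrite exprS /= (coef_fps_mul N) //; apply: coefM_eq_lt lt_iN => // j lt_jN.
by rewrite coef_trunc // IH.
Qed.

Lemma trunc_F_fixpoint N i : (i < N)%N ->
  (trunc N F_)`_i = ('X * (1 + trunc N F_ - trunc N F_ ^+ 2))`_i.
Proof.
set f := trunc N F_; set p : {poly rat} := 1 - 'X *+ 2 + 'X^2 *+ 5.
(* q = 1 - x + 2xF agrees with sqrt p, and q^2 - p = 4x (F - x (1 + F - F^2)). *)
set q : {poly rat} := 1 + 'X * (f *+ 2 - 1).
have q_sqrt j : (j < N.+1)%N -> q`_j = (trunc N.+1 (fps_sqrt P_))`_j.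
  move=> lt_jN; rewrite coef_trunc // coefD coef1 coefXM.
  case: j lt_jN => [|j] //= lt_jN.
  rewrite coefB coefMn coef1 coef_trunc // /F_ add0r.
  by case: j {lt_jN} => [|j] /=; field.
have qq_p j : (j < N.+1)%N -> (q * q)`_j = p`_j.
  move=> lt_jN; rewrite (@coefM_eq_lt _ _ _ _ _ q_sqrt q_sqrt) // -coef_fps_mul //.
  rewrite fps_sqrt_sqr //.
  by rewrite /p !coefD coefN !coefMn coef1 coefX coefXn; case: j {lt_jN} => [|[|[|j]]].
have qq_pE : q * q - p = ('X * (f - 'X * (1 + f - f ^+ 2))) *+ 4 by rewrite /q /p; ring.
move=> lt_iN; apply/eqP; rewrite -subr_eq0 -coefB.
have := congr1 (fun r : {poly rat} => r`_i.+1) qq_pE.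
by rewrite /= coefB !qq_p // subrr coefMn coefXM => /esym/eqP; rewrite mulrn_eq0.
Qed.

Lemma coef_expr_eq0 (R : comNzRingType) (p : {poly R}) k i :
  p`_0 = 0 -> (i < k)%N -> (p ^+ k)`_i = 0.
Proof.
move=> p0; elim: k i => [//|k IH] i lt_ik; rewrite exprS coefM big1 // => -[[|j] lt_ji] _.
  by rewrite p0 mul0r.
rewrite IH ?mulr0 //= -subSS ltn_subLR // !addSn !ltnS.
by rewrite (leq_trans _ (leq_addl j k)) // -ltnS.
Qed.

Lemma t_coef N n k : (n.+1 < N)%N -> t_ n k = (trunc N F_ ^+ k.+1)`_n.+1.
Proof. exact: coef_fps_pow. Qed.

Lemma t00 : t_ 0 0 = 1.
Proof.
rewrite (t_coef 2) // expr1 trunc_F_fixpoint // coefXM /= coefB coefD coef1 expr2 coef0M.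
by rewrite trunc_F_fixpoint // coefXM mul0r !subr0.
Qed.

Lemma t_small n k : (n < k)%N -> t_ n k = 0.
Proof.
move=> lt_nk; rewrite (t_coef n.+2) // coef_expr_eq0 //.
by rewrite trunc_F_fixpoint // coefXM.
Qed.

(* Compare the coefficients of x^(n+2) in F^(k+1) = x (F^k + F^(k+1) - F^(k+2)). *)
Lemma tS n k :
  t_ n.+1 k = (if k is k'.+1 then t_ n k' else 0) + t_ n k - t_ n k.+1.
Proof.
rewrite !(t_coef n.+3) //; set f := trunc n.+3 F_.
rewrite [in LHS]exprS (@coefM_eq_lt n.+3 _ _ _ (f ^+ k) (trunc_F_fixpoint _)) //.
have -> : 'X * (1 + f - f ^+ 2) * f ^+ k = 'X * (f ^+ k + f ^+ k.+1 - f ^+ k.+2).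
  by rewrite !exprS; move: (f ^+ k) => g; ring.
rewrite coefXM /= coefB coefD; case: k => [|k]; first by rewrite expr0 coef1.
by rewrite (t_coef n.+3).
Qed.

Lemma sum_tS n (c : nat -> rat) :
  \sum_(0 <= k < n.+2) t_ n.+1 k * c k =
  \sum_(0 <= k < n.+1) t_ n k * (c k.+1 + c k - (if k is k'.+1 then c k' else 0)).
Proof.
have shift_down : \sum_(0 <= k < n.+2) (if k is k'.+1 then t_ n k' else 0) * c k =
                  \sum_(0 <= k < n.+1) t_ n k * c k.+1.
  by rewrite big_nat_recl // mul0r add0r.
have drop_last : \sum_(0 <= k < n.+2) t_ n k * c k = \sum_(0 <= k < n.+1) t_ n k * c k.
  by rewrite big_nat_recr //= t_small // mul0r addr0.
have shift_up : \sum_(0 <= k < n.+2) t_ n k.+1 * c k =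
                \sum_(0 <= k < n.+1) t_ n k * (if k is k'.+1 then c k' else 0).
  rewrite [RHS]big_nat_recl // mulr0 add0r.
  by rewrite !big_nat_recr //= !t_small // !mul0r !addr0.
under eq_bigr do rewrite tS mulrBl mulrDl.
rewrite sumrB big_split /= shift_down drop_last shift_up -big_split -sumrB /=.
by apply: eq_bigr => k _; rewrite mulrBr mulrDr.
Qed.

Section Transfer.

Variables a b : nat -> nat -> rat.
Hypothesis a0 : forall j, a 0%N j = 1.
Hypothesis aS : forall n j,
  a n.+1 j = a n j.+1 + (if j is j'.+1 then a n j' else 0) + a n j.
Hypothesis b0 : forall j, b 0%N j = 1.
Hypothesis bS : forall k j,
  b k.+1 j = b k j.+1 + (if j is j'.+1 then b k j' else 0) +
             (if k is k'.+1 then b k' j else 0).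

Lemma t_transfer n j : a n j = \sum_(0 <= k < n.+1) t_ n k * b k j.
Proof.
elim: n j => [|n IH] j; first by rewrite big_nat1 t00 a0 b0 mul1r.
have a_prev : (if j is j'.+1 then a n j' else 0) =
              \sum_(0 <= k < n.+1) t_ n k * (if j is j'.+1 then b k j' else 0).
  by case: j => [|j]; [rewrite big1 // => k _; rewrite mulr0 | apply: IH].
rewrite sum_tS aS a_prev !IH -!big_split; apply: eq_bigr => k _ /=.
by rewrite bS -!mulrDr [in RHS]addrAC addrK.
Qed.

End Transfer.

Lemma m_meander_count n : m_ n = meander_count [:: U; D; Hh] n 0.
Proof. by rewrite /m_ count_symmetric_paths // => -[]. Qed.

Lemma s_meander_count n : s_ n = meander_count [:: U; D; HH] n 0.
Proof. by rewrite /s_ count_symmetric_paths // => -[]. Qed.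

Lemma motzkin_meander_countS n j :
  let c := meander_count [:: U; D; Hh] in
  c n.+1 j = (c n j.+1 + (if j is j'.+1 then c n j' else 0) + c n j)%N.
Proof. by rewrite /= meander_countS // !big_cons big_nil /= subn1 addn0 addnA; case: j. Qed.

Lemma schroder_meander_countS k j :
  let c := meander_count [:: U; D; HH] in
  c k.+1 j = (c k j.+1 + (if j is j'.+1 then c k j' else 0) +
              (if k is k'.+1 then c k' j else 0))%N.
Proof.
rewrite /= meander_countS // !big_cons big_nil /= subn1 addn0 addnA.
by case: j => [|j]; case: k => [|k]; rewrite ?subSS ?subn0.
Qed.

Theorem theorem3p6 (n : nat) :
  (m_ n)%:R = \sum_(0 <= k < n.+1) t_ n k * (s_ k)%:R :> rat.
Proof.
rewrite m_meander_count; under eq_bigr do rewrite s_meander_count.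
apply: (@t_transfer (fun n j => (meander_count [:: U; D; Hh] n j)%:R)
                    (fun k j => (meander_count [:: U; D; HH] k j)%:R)) => // [m j|k j].
  by rewrite motzkin_meander_countS !natrD; case: j.
by rewrite schroder_meander_countS !natrD; case: j; case: k.
Qed.
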